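(* Let $f\in C^1[0,1]$ with $f(0)=0$, $h:=f'$, $q$ satisfying (q), and $c^*$ as below. Let $c_2>c_1\ge c^*$, and let $z_1$, $z_2$ be solutions of $(P_{c_1})$ and $(P_{c_2})$ respectively. If $z_1(1)\le z_2(1)$, then $z_1(\varphi)<z_2(\varphi)$ for all $\varphi\in(0,1)$.
   Context: Condition (q): $q\in C[0,1]$, $q>0$ on $(0,1)$, $q(0)=q(1)=0$, and $\limsup_{\varphi\to0^+}q(\varphi)/\varphi<+\infty$. For $c\in\mathbb R$, a solution of problem $(P_c)$ is a function $z\in C[0,1]\cap C^1(0,1)$ with $\dot z(\varphi)=h(\varphi)-c-q(\varphi)/z(\varphi)$ and $z(\varphi)<0$ for all $\varphi\in(0,1)$, and $z(0)=0$. A solution of $(P^{00}_c)$ is a solution of $(P_c)$ which also satisfies $z(1)=0$. $c^*$ denotes the real number such that $(P^{00}_c)$ has a solution iff $c\ge c^*$ (that solution being unique). *)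

From Stdlib Require Import Reals.
From Coquelicot Require Import Coquelicot.
Open Scope R_scope.

Definition cont_on01 (g : R -> R) : Prop :=
  forall x, 0 <= x <= 1 ->
    filterlim g (within (fun y => 0 <= y <= 1) (locally x)) (locally (g x)).

(* f in C^1[0,1] with derivative h : f, h continuous on [0,1] and
   f' = h on (0,1) (so h is the continuous extension of f' to [0,1]). *)
Definition C1_with_deriv (f h : R -> R) : Prop :=
  cont_on01 f /\ cont_on01 h /\
  (forall x, 0 < x < 1 -> is_derive f x (h x)).

Definition cond_q (q : R -> R) : Prop :=
  cont_on01 q /\
  (forall x, 0 < x < 1 -> 0 < q x) /\
  q 0 = 0 /\ q 1 = 0 /\
  (* limsup_{phi -> 0+} q(phi)/phi < +oo *)
  (exists M delta, 0 < delta /\ forall x, 0 < x < delta -> q x / x <= M).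

Definition sol_P (h q : R -> R) (c : R) (z : R -> R) : Prop :=
  cont_on01 z /\
  (forall x, 0 < x < 1 -> is_derive z x (h x - c - q x / z x)) /\
  (forall x, 0 < x < 1 -> continuous (Derive z) x) /\
  (forall x, 0 < x < 1 -> z x < 0) /\
  z 0 = 0.

Definition sol_P00 (h q : R -> R) (c : R) (z : R -> R) : Prop :=
  sol_P h q c z /\ z 1 = 0.

(* Put w := z2 - z1.  On (0,1) both z_i are negative and
     w' = (c1 - c2) + q (z2 - z1) / (z1 z2),
   so w' < 0 at every point where w <= 0, because c1 < c2, q > 0 and
   z1 z2 > 0 there.  A function with this property cannot climb back once
   it is nonpositive: by a supremum argument it is strictly decreasing to
   the right of any point where it is <= 0 (Section [Descent]).  Hence if
   w(x) <= 0 for some x in (0,1), then w stays below w((x+1)/2) < 0 on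
   ((x+1)/2, 1), and continuity at 1 gives w(1) < 0, i.e. z2(1) < z1(1),
   contradicting the hypothesis z1(1) <= z2(1).
   The argument only uses c1 < c2, the positivity of q on (0,1) and the
   defining properties of solutions. *)

From Stdlib Require Import Reals Lra.
From Coquelicot Require Import Coquelicot.
Open Scope R_scope.

Definition descends_where_nonpos (w : R -> R) : Prop :=
  forall p, 0 < p < 1 -> w p <= 0 -> exists D, D < 0 /\ derivable_pt_lim w p D.

Section Descent.

Variable w : R -> R.
Hypothesis w_descends : descends_where_nonpos w.
Hypothesis w_continuous : forall p, 0 < p < 1 -> continuity_pt w p.

Lemma nonpos_step_down p t :
  0 < p < 1 -> p < t -> w p <= 0 -> exists s, p < s < t /\ w s < w p.
Proof.
  intros Hp Hpt Hwp.
  destruct (w_descends p Hp Hwp) as [D [HD Hlim]].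
  destruct (Hlim (- D / 2)) as [d Hd]; [lra|].
  assert (Hd0 := cond_pos d).
  set (k := Rmin (d / 2) ((t - p) / 2)).
  assert (Hk : 0 < k) by (apply Rmin_pos; lra).
  assert (Hkd : k <= d / 2) by apply Rmin_l.
  assert (Hkt : k <= (t - p) / 2) by apply Rmin_r.
  specialize (Hd k ltac:(lra) ltac:(rewrite Rabs_right; lra)).
  apply Rabs_def2 in Hd as [Hslope _].
  assert (Hquot : (w (p + k) - w p) / k < 0) by lra.
  exists (p + k); split; [lra|].
  assert (Hscale : w (p + k) - w p = (w (p + k) - w p) / k * k) by (field; lra).
  nra.
Qed.

(* Once nonpositive at a, w never rises above w a on [a, 1): the supremum s
   of {t in [a, t1] | w t <= w a} lies in that set by continuity, and
   [nonpos_step_down] forbids s < t1. *)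
Lemma nonpos_nonincreasing a t1 :
  0 < a -> a < t1 -> t1 < 1 -> w a <= 0 -> w t1 <= w a.
Proof.
  intros Ha Hat Ht1 Hwa.
  set (E := fun t => a <= t <= t1 /\ w t <= w a).
  destruct (completeness E) as [s [Hub Hlub]].
  { exists t1. intros t [Ht _]. lra. }
  { exists a. split; lra. }
  assert (Has : a <= s) by (apply Hub; split; lra).
  assert (Hst : s <= t1) by (apply Hlub; intros t [Ht _]; lra).
  assert (Hws : w s <= w a).
  { destruct (Rle_or_lt (w s) (w a)) as [|Hgt]; [assumption|exfalso].
    destruct (w_continuous s ltac:(lra) (w s - w a) ltac:(lra)) as [al [Hal Hnear]].
    (* near s every value of w exceeds w a, so s - al/2 bounds E *)
    enough (s <= s - al / 2) by lra.
    apply Hlub. intros t [Ht Hwt].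
    destruct (Rle_or_lt t (s - al / 2)) as [|Hclose]; [assumption|exfalso].
    assert (t <= s) by (apply Hub; split; assumption).
    destruct (Req_dec t s) as [->|Hts]; [lra|].
    assert (Hdist : R_dist t s < al) by (unfold R_dist; rewrite Rabs_left1; lra).
    specialize (Hnear t (conj (conj I (not_eq_sym Hts)) Hdist)).
    simpl in Hnear. unfold R_dist in Hnear.
    apply Rabs_def2 in Hnear. lra. }
  destruct (Req_dec s t1) as [<-|Hne]; [assumption|exfalso].
  destruct (nonpos_step_down s t1 ltac:(lra) ltac:(lra) ltac:(lra)) as [t [Ht Hwt]].
  assert (t <= s) by (apply Hub; split; lra).
  lra.
Qed.

Lemma nonpos_decreasing a t1 :
  0 < a -> a < t1 -> t1 < 1 -> w a <= 0 -> w t1 < w a.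
Proof.
  intros Ha Hat Ht1 Hwa.
  destruct (nonpos_step_down a t1 ltac:(lra) Hat Hwa) as [t [Ht Hwt]].
  assert (w t1 <= w t) by (apply nonpos_nonincreasing; lra).
  lra.
Qed.

End Descent.

Lemma cont_on01_minus (u v : R -> R) :
  cont_on01 u -> cont_on01 v -> cont_on01 (fun y => u y - v y).
Proof.
  intros Hu Hv x Hx.
  apply (filterlim_comp_2 (G := locally (u x)) (H := locally (opp (v x)))
           u (fun y => opp (v y)) plus).
  - exact (Hu x Hx).
  - eapply filterlim_comp; [exact (Hv x Hx)|].
    exact (filterlim_opp (K := R_AbsRing) (V := R_NormedModule) (v x)).
  - exact (filterlim_plus (K := R_AbsRing) (V := R_NormedModule) (u x) (opp (v x))).
Qed.

Lemma bound_at_one (w : R -> R) (m b : R) :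
  cont_on01 w -> 0 <= m < 1 -> (forall y, m < y < 1 -> w y <= b) -> w 1 <= b.
Proof.
  intros Hw Hm Hb.
  destruct (Rle_or_lt (w 1) b) as [|Hgt]; [assumption|exfalso].
  assert (He : 0 < w 1 - b) by lra.
  assert (Hw1 := Hw 1 ltac:(lra)).
  destruct (proj1 (filterlim_locally _ _) Hw1 (mkposreal _ He)) as [d Hd].
  assert (Hd0 := cond_pos d).
  set (y := 1 - Rmin d (1 - m) / 2).
  assert (Hmin : 0 < Rmin d (1 - m)) by (apply Rmin_pos; lra).
  assert (Hmd : Rmin d (1 - m) <= d) by apply Rmin_l.
  assert (Hmm : Rmin d (1 - m) <= 1 - m) by apply Rmin_r.
  assert (Hnear : Rabs (w y - w 1) < w 1 - b).
  { apply (Hd y); [|unfold y; lra].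
    change (Rabs (y - 1) < d). unfold y. rewrite Rabs_left1; lra. }
  apply Rabs_def2 in Hnear.
  assert (w y <= b) by (apply Hb; unfold y; lra).
  lra.
Qed.

Lemma sol_P_derivable (h q : R -> R) (c : R) (z : R -> R) :
  sol_P h q c z ->
  forall p, 0 < p < 1 -> derivable_pt_lim z p (h p - c - q p / z p).
Proof.
  intros [_ [Hz _]] p Hp. apply is_derive_Reals, Hz, Hp.
Qed.

(* The gap z2 - z1 between solutions for speeds c1 < c2 descends wherever it
   is nonpositive:  w' = (c1 - c2) + q w / (z1 z2)  with  q > 0, z1 z2 > 0. *)
Lemma solution_gap_descends (h q : R -> R) (c1 c2 : R) (z1 z2 : R -> R) :
  c1 < c2 -> (forall p, 0 < p < 1 -> 0 < q p) ->
  sol_P h q c1 z1 -> sol_P h q c2 z2 ->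
  descends_where_nonpos (fun y => z2 y - z1 y).
Proof.
  intros Hc Hq Hs1 Hs2 p Hp Hwp.
  eexists; split;
    [|exact (derivable_pt_lim_minus _ _ _ _ _
               (sol_P_derivable _ _ _ _ Hs2 p Hp) (sol_P_derivable _ _ _ _ Hs1 p Hp))].
  destruct Hs1 as [_ [_ [_ [Hneg1 _]]]]. destruct Hs2 as [_ [_ [_ [Hneg2 _]]]].
  assert (N1 := Hneg1 p Hp). assert (N2 := Hneg2 p Hp). assert (Q := Hq p Hp).
  assert (Hdiff : q p / z1 p - q p / z2 p = q p * (z2 p - z1 p) / (z1 p * z2 p))
    by (field; lra).
  assert (Hsign : q p * (z2 p - z1 p) / (z1 p * z2 p) <= 0).
  { apply Rmult_le_0_r; [nra|]. left. apply Rinv_0_lt_compat. nra. }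
  lra.
Qed.

Lemma solution_gap_continuous (h q : R -> R) (c1 c2 : R) (z1 z2 : R -> R) :
  sol_P h q c1 z1 -> sol_P h q c2 z2 ->
  forall p, 0 < p < 1 -> continuity_pt (fun y => z2 y - z1 y) p.
Proof.
  intros Hs1 Hs2 p Hp.
  apply derivable_continuous_pt. eexists.
  exact (derivable_pt_lim_minus _ _ _ _ _
           (sol_P_derivable _ _ _ _ Hs2 p Hp) (sol_P_derivable _ _ _ _ Hs1 p Hp)).
Qed.

Theorem corollary5p2 (f h q : R -> R) (cstar c1 c2 : R) (z1 z2 : R -> R) :
  C1_with_deriv f h ->
  f 0 = 0 ->
  cond_q q ->
  (forall c : R, (exists z : R -> R, sol_P00 h q c z) <-> cstar <= c) ->
  cstar <= c1 -> c1 < c2 ->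
  sol_P h q c1 z1 -> sol_P h q c2 z2 ->
  z1 1 <= z2 1 ->
  forall x : R, 0 < x < 1 -> z1 x < z2 x.
Proof.
  intros _ _ [_ [Hq _]] _ _ Hc Hs1 Hs2 Hend x Hx.
  set (w := fun y => z2 y - z1 y).
  assert (Hdesc : descends_where_nonpos w)
    by exact (solution_gap_descends _ _ _ _ _ _ Hc Hq Hs1 Hs2).
  assert (Hcont := solution_gap_continuous _ _ _ _ _ _ Hs1 Hs2).
  destruct (Rlt_or_le (z1 x) (z2 x)) as [|Hle]; [assumption|exfalso].
  assert (Hwx : w x <= 0) by (unfold w; lra).
  set (m := (x + 1) / 2).
  assert (Hwm : w m < w x) by (apply (nonpos_decreasing w Hdesc Hcont); unfold m; lra).
  assert (Hw1 : w 1 <= w m).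
  { apply (bound_at_one w m).
    - exact (cont_on01_minus _ _ (proj1 Hs2) (proj1 Hs1)).
    - unfold m; lra.
    - intros y Hy. left. apply (nonpos_decreasing w Hdesc Hcont); unfold m in *; lra. }
  unfold w in Hw1, Hwm, Hwx. lra.
Qed.
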